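(* Let $P_7(\lambda;m,\varepsilon)$ be the seventh-order polynomial in $\lambda$ defined in the context. There exist $\upsilon_0>0$ and $\varepsilon_*>0$ such that, for all $m\in[3,7]$, all $\varepsilon\in(0,\varepsilon_* )$ and any purely imaginary root $i\upsilon$ of $P_7(\cdot;m,\varepsilon)$ with $\upsilon>0$, it holds that $0<\upsilon<\upsilon_0$.
   Context: $P_7(\lambda;m,\varepsilon)=a_0\lambda^7+a_1\lambda^6+a_2\lambda^5+a_3\lambda^4+a_4\lambda^3+a_5\lambda^2+a_6\lambda+a_7$ with $a_i=a_i(m,\varepsilon)$: $a_0=2^{11}(\varepsilon-1)^4\varepsilon^2$; $a_1=-2^{11}(\varepsilon^2-\varepsilon)^2[(5\varepsilon^2-2\varepsilon+1)m^2+2(\varepsilon+1)^2m+4]$; $a_2=(\varepsilon^2-\varepsilon)[\varepsilon(59\varepsilon^3-9\varepsilon^2+17\varepsilon-3)m^4+4\varepsilon(15\varepsilon^3+15\varepsilon^2+17\varepsilon+1)m^3+4(\varepsilon+2)(\varepsilon^3+9\varepsilon^2+5\varepsilon+1)m^2-8(2\varepsilon^3-3\varepsilon^2-4\varepsilon-3)m-8(\varepsilon-1)(\varepsilon+2)]$; $a_3=2^7[-\varepsilon^2(5\varepsilon-1)(9\varepsilon^3+\varepsilon^2+7\varepsilon-1)m^6-2\varepsilon^2(59\varepsilon^4-8\varepsilon^3+74\varepsilon^2+8\varepsilon-5)m^5-4\varepsilon(4\varepsilon^5+27\varepsilon^4+24\varepsilon^3+37\varepsilon^2+6\varepsilon-2)m^4+4\varepsilon(4\varepsilon^5+20\varepsilon^4-31\varepsilon^3-23\varepsilon^2-33\varepsilon-1)m^3+4(9\varepsilon^5+27\varepsilon^4-15\varepsilon^3-24\varepsilon^2-12\varepsilon-1)m^2+4(\varepsilon^4+17\varepsilon^3-7\varepsilon^2-9\varepsilon-2)m-4(\varepsilon-1)^2(2\varepsilon+1)]$;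 $a_4=2^3[\varepsilon^2(9\varepsilon-1)^2(\varepsilon-1)^2m^8+8\varepsilon^2(\varepsilon-1)(45\varepsilon^3+5\varepsilon^2-21\varepsilon+3)m^7+8\varepsilon(21\varepsilon^5-58\varepsilon^4-84\varepsilon^3-32\varepsilon^2+27\varepsilon-2)m^6-16\varepsilon(34\varepsilon^5+42\varepsilon^4+113\varepsilon^3+81\varepsilon^2-7\varepsilon-7)m^5-16(7\varepsilon^6+96\varepsilon^5+75\varepsilon^4+176\varepsilon^3+42\varepsilon^2-10\varepsilon-2)m^4+16\varepsilon(6\varepsilon^4-75\varepsilon^3-65\varepsilon^2-117\varepsilon-5)m^3+16(29\varepsilon^4-7\varepsilon^3-48\varepsilon^2-31\varepsilon-7)m^2+32(\varepsilon-1)(7\varepsilon^2+14\varepsilon+3)m-16(\varepsilon-1)^2]$; $a_5=2^5m[\varepsilon^2(\varepsilon-1)^2(9\varepsilon^2+\varepsilon-2)m^7+(\varepsilon^2-\varepsilon)(38\varepsilon^4+46\varepsilon^3-39\varepsilon^2+3)m^6+(36\varepsilon^6+33\varepsilon^5-123\varepsilon^4-95\varepsilon^3+54\varepsilon^2-1)m^5-(8\varepsilon^6-8\varepsilon^5+169\varepsilon^4+233\varepsilon^3+25\varepsilon^2-41\varepsilon-2)m^4-(60\varepsilon^5+110\varepsilon^4+320\varepsilon^3+129\varepsilon^2-22\varepsilon-21)m^3-4(16\varepsilon^4+37\varepsilon^3+41\varepsilon^2+7\varepsilon-5)m^2+2(4\varepsilon^3-37\varepsilon^2-10\varepsilon-5)m+4(5\varepsilon^2-2\varepsilon-3)]$;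 $a_6=2^3m[2\varepsilon^2(\varepsilon-1)^2(\varepsilon+1)(2\varepsilon-1)m^7+(\varepsilon^2-\varepsilon)(16\varepsilon^4+58\varepsilon^3-19\varepsilon^2-10\varepsilon+3)m^6+(16\varepsilon^6+72\varepsilon^5-39\varepsilon^4-171\varepsilon^3+42\varepsilon^2+17\varepsilon-1)m^5+2(20\varepsilon^5-12\varepsilon^4-113\varepsilon^3-69\varepsilon^2+41\varepsilon+5)m^4-(2\varepsilon+1)(18\varepsilon^3+81\varepsilon^2+80\varepsilon-51)m^3-4(28\varepsilon^3+31\varepsilon^2+20\varepsilon-15)m^2-4(11\varepsilon-3)(\varepsilon+1)m-8(1-\varepsilon)]$; $a_7=2^4(m^2+m^3)[\varepsilon^2(\varepsilon^2-1)(2\varepsilon-1)m^4+\varepsilon(2\varepsilon-1)(3\varepsilon^2-3\varepsilon-2)m^3+(2\varepsilon^4-13\varepsilon^2+4\varepsilon+1)m^2-3(2\varepsilon-1)(\varepsilon+1)m+2(1-2\varepsilon)]$. *)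

From HB Require Import structures.
From mathcomp Require Import all_boot all_order all_algebra.
From mathcomp Require Import reals.
From mathcomp Require Import complex.
Set Implicit Arguments. Unset Strict Implicit. Unset Printing Implicit Defensive.
Import Order.TTheory GRing.Theory Num.Theory.
Local Open Scope ring_scope.

Section P7def.
Variable R : realType.
Variables m e : R.

Definition a0 : R := 2^+11 * (e - 1)^+4 * e^+2.
Definition a1 : R := - 2^+11 * (e^+2 - e)^+2 *
  ((5*e^+2 - 2*e + 1) * m^+2 + 2*(e + 1)^+2 * m + 4).
Definition a2 : R := (e^+2 - e) *
  (e*(59*e^+3 - 9*e^+2 + 17*e - 3)* m^+4 + 4*e*(15*e^+3 + 15*e^+2 + 17*e + 1)* m^+3
   + 4*(e + 2)*(e^+3 + 9*e^+2 + 5*e + 1)* m^+2 - 8*(2*e^+3 - 3*e^+2 - 4*e - 3)* m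
   - 8*(e - 1)*(e + 2)).
Definition a3 : R := 2^+7 *
  (- e^+2*(5*e - 1)*(9*e^+3 + e^+2 + 7*e - 1)* m^+6
   - 2*e^+2*(59*e^+4 - 8*e^+3 + 74*e^+2 + 8*e - 5)* m^+5
   - 4*e*(4*e^+5 + 27*e^+4 + 24*e^+3 + 37*e^+2 + 6*e - 2)* m^+4
   + 4*e*(4*e^+5 + 20*e^+4 - 31*e^+3 - 23*e^+2 - 33*e - 1)* m^+3
   + 4*(9*e^+5 + 27*e^+4 - 15*e^+3 - 24*e^+2 - 12*e - 1)* m^+2
   + 4*(e^+4 + 17*e^+3 - 7*e^+2 - 9*e - 2)* m
   - 4*(e - 1)^+2*(2*e + 1)).
Definition a4 : R := 2^+3 *
  (e^+2*(9*e - 1)^+2*(e - 1)^+2* m^+8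
   + 8*e^+2*(e - 1)*(45*e^+3 + 5*e^+2 - 21*e + 3)* m^+7
   + 8*e*(21*e^+5 - 58*e^+4 - 84*e^+3 - 32*e^+2 + 27*e - 2)* m^+6
   - 16*e*(34*e^+5 + 42*e^+4 + 113*e^+3 + 81*e^+2 - 7*e - 7)* m^+5
   - 16*(7*e^+6 + 96*e^+5 + 75*e^+4 + 176*e^+3 + 42*e^+2 - 10*e - 2)* m^+4
   + 16*e*(6*e^+4 - 75*e^+3 - 65*e^+2 - 117*e - 5)* m^+3
   + 16*(29*e^+4 - 7*e^+3 - 48*e^+2 - 31*e - 7)* m^+2
   + 32*(e - 1)*(7*e^+2 + 14*e + 3)* m
   - 16*(e - 1)^+2).
Definition a5 : R := 2^+5 * m *
  (e^+2*(e - 1)^+2*(9*e^+2 + e - 2)* m^+7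
   + (e^+2 - e)*(38*e^+4 + 46*e^+3 - 39*e^+2 + 3)* m^+6
   + (36*e^+6 + 33*e^+5 - 123*e^+4 - 95*e^+3 + 54*e^+2 - 1)* m^+5
   - (8*e^+6 - 8*e^+5 + 169*e^+4 + 233*e^+3 + 25*e^+2 - 41*e - 2)* m^+4
   - (60*e^+5 + 110*e^+4 + 320*e^+3 + 129*e^+2 - 22*e - 21)* m^+3
   - 4*(16*e^+4 + 37*e^+3 + 41*e^+2 + 7*e - 5)* m^+2
   + 2*(4*e^+3 - 37*e^+2 - 10*e - 5)* m
   + 4*(5*e^+2 - 2*e - 3)).
Definition a6 : R := 2^+3 * m *
  (2*e^+2*(e - 1)^+2*(e + 1)*(2*e - 1)* m^+7
   + (e^+2 - e)*(16*e^+4 + 58*e^+3 - 19*e^+2 - 10*e + 3)* m^+6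
   + (16*e^+6 + 72*e^+5 - 39*e^+4 - 171*e^+3 + 42*e^+2 + 17*e - 1)* m^+5
   + 2*(20*e^+5 - 12*e^+4 - 113*e^+3 - 69*e^+2 + 41*e + 5)* m^+4
   - (2*e + 1)*(18*e^+3 + 81*e^+2 + 80*e - 51)* m^+3
   - 4*(28*e^+3 + 31*e^+2 + 20*e - 15)* m^+2
   - 4*(11*e - 3)*(e + 1)* m
   - 8*(1 - e)).
Definition a7 : R := 2^+4 * (m^+2 + m^+3) *
  (e^+2*(e^+2 - 1)*(2*e - 1)* m^+4
   + e*(2*e - 1)*(3*e^+2 - 3*e - 2)* m^+3
   + (2*e^+4 - 13*e^+2 + 4*e + 1)* m^+2
   - 3*(2*e - 1)*(e + 1)* m
   + 2*(1 - 2*e)).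

Definition P7 : {poly R} :=
  a0%:P * 'X^7 + a1%:P * 'X^6 + a2%:P * 'X^5 + a3%:P * 'X^4
  + a4%:P * 'X^3 + a5%:P * 'X^2 + a6%:P * 'X + a7%:P.

End P7def.

From HB Require Import structures.
From mathcomp Require Import all_boot all_order all_algebra.
From mathcomp Require Import reals complex.
From mathcomp Require Import ring lra.
Import Order.TTheory GRing.Theory Num.Theory.
Set Implicit Arguments.
Unset Strict Implicit.
Unset Printing Implicit Defensive.
Local Open Scope ring_scope.

(* For a real polynomial p and u <> 0, the imaginary part of p(iu) is u q(-u^2),
   where q is the odd part of p; for P_7, q is the cubic a6 + a4 X + a2 X^2 + a0 X^3.
   For m in [3, 7] and eps <= 10^-9 we have a0 >= 0, a2 <= 0, a4 >= 10^4 and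
   a6 <= 10^7, so the signs of the cubic at X = -u^2 force a4 u^2 <= a6, hence
   u^2 <= 10^3 and u < 32.  The coefficient bounds hold with room to spare at
   eps = 0, and every monomial eps^(i+1) m^j is at most 7^j eps. *)

Lemma horner_even_odd (R : comNzRingType) (p : {poly R}) (x : R) :
  p.[x] = (even_poly p).[x ^+ 2] + (odd_poly p).[x ^+ 2] * x.
Proof. by rewrite -{1}(poly_even_odd p) !(hornerE, horner_comp). Qed.

Lemma even_poly_map (aR rR : nzRingType) (f : {additive aR -> rR}) (p : {poly aR}) :
  even_poly (map_poly f p) = map_poly f (even_poly p).
Proof. by apply/polyP => i; rewrite coef_even_poly !coef_map /= coef_even_poly. Qed.

Lemma odd_poly_map (aR rR : nzRingType) (f : {additive aR -> rR}) (p : {poly aR}) :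
  odd_poly (map_poly f p) = map_poly f (odd_poly p).
Proof. by apply/polyP => i; rewrite coef_odd_poly !coef_map /= coef_odd_poly. Qed.

Lemma root_imaginary_odd_poly (R : rcfType) (p : {poly R}) (u : R) : u != 0 ->
  root (map_poly (real_complex R) p) ('i%C * u%:C%C) -> root (odd_poly p) (- u ^+ 2).
Proof.
move=> u_neq0; rewrite /root horner_even_odd even_poly_map odd_poly_map.
have -> : ('i%C * u%:C%C) ^+ 2 = (- u ^+ 2)%:C%C.
  by rewrite exprMn sqrCi rmorphN rmorphXn mulN1r.
rewrite !horner_map /=.
set E := (even_poly p).[_]; set O := (odd_poly p).[_].
have -> : (E%:C + O%:C * ('i * u%:C))%C = (E +i* (O * u))%C.
  by congr (_ +i* _)%C => /=; ring.
by case/eqP=> _ /eqP; rewrite mulf_eq0 (negPf u_neq0) orbF.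
Qed.

Lemma root_cubic_nonpos_le (R : realDomainType) (c0 c1 c2 c3 x : R) :
  c2 <= 0 -> 0 <= c3 -> x <= 0 ->
  root (c0%:P + c1%:P * 'X + c2%:P * 'X^2 + c3%:P * 'X^3) x -> - (c1 * x) <= c0.
Proof.
move=> c2_le0 c3_ge0 x_le0.
rewrite /root !(hornerD, hornerCM, hornerXn, hornerX, hornerC) => /eqP root_x.
have : c2 * x ^+ 2 <= 0 by rewrite mulr_le0_ge0 ?sqr_ge0.
have : c3 * x ^+ 3 <= 0 by rewrite mulr_ge0_le0 // exprn_odd_le0.
lra.
Qed.

Lemma monomial_bounds (R : realDomainType) (e m M : R) :
  0 <= e <= 1 -> 0 <= m <= M ->
  forall i j : nat, 0 <= e ^+ i.+1 * m ^+ j <= M ^+ j * e.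
Proof.
move=> /andP[e_ge0 e_le1] /andP[m_ge0 m_leM] i j.
have mj_leMj : m ^+ j <= M ^+ j by rewrite lerXn2r // nnegrE (le_trans m_ge0).
rewrite mulr_ge0 ?exprn_ge0 //= exprS -mulrA mulrC ler_wpM2r //.
by rewrite -[leRHS]mul1r ler_pM ?exprn_ge0 ?exprn_ile1.
Qed.

Ltac add_bounds_down B j lo :=
  have /andP[? ?] := B j;
  tryif constr_eq j lo then idtac
  else lazymatch j with S ?j' => add_bounds_down B j' lo end.

(* Every monomial eps^(i+1) m^j occurring in the a_k has j >= i - 1, so only
   that band of bounds is handed to lra. *)
Ltac add_monomial_bounds B imax jmax :=
  let rec rows i :=
    let lo := eval compute in i.-1 in
    add_bounds_down (B i) jmax lo;
    lazymatch i with S ?i' => rows i' | O => idtac end in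
  rows imax.

Section Coefficients.
Variable R : realType.
Implicit Types m e : R.

Lemma odd_poly_P7 m e : odd_poly (P7 m e) =
  (a6 m e)%:P + (a4 m e)%:P * 'X + (a2 m e)%:P * 'X^2 + (a0 e)%:P * 'X^3.
Proof.
apply/polyP => i; rewrite coef_odd_poly /P7 !coefD !coefCM !coefXn !coefX !coefC.
by case: i => [|[|[|[|i]]]] /=; rewrite ?mulr0 ?mulr1 ?addr0 ?add0r.
Qed.

Lemma a0_ge0 e : 0 <= a0 e.
Proof. rewrite /a0; have := sqr_ge0 ((e - 1) ^+ 2 * e); lra. Qed.

Lemma a2_le0 m e : 3 <= m <= 7 -> 0 <= e -> 10 ^+ 9 * e <= 1 -> a2 m e <= 0.
Proof.
move=> /andP[m_ge3 m_le7] e_ge0 e_small.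
have B := @monomial_bounds R e m 7 ltac:(lra) ltac:(lra).
have m_sqr_ge0 := sqr_ge0 m.
rewrite /a2 mulr_le0_ge0 //; first by nra.
by add_monomial_bounds B 3%N 4%N; lra.
Qed.

Lemma a4_ge m e : 3 <= m <= 7 -> 0 <= e -> 10 ^+ 9 * e <= 1 -> 10 ^+ 4 <= a4 m e.
Proof.
move=> /andP[m_ge3 m_le7] e_ge0 e_small.
have B := @monomial_bounds R e m 7 ltac:(lra) ltac:(lra).
have a4_at_0 : 10240 <= 256 * m ^+ 4 - 896 * m ^+ 2 - 768 * m - 128.
  have t_ge0 : 0 <= m - 3 by lra.
  have := exprn_ge0 2 t_ge0; have := exprn_ge0 3 t_ge0; have := exprn_ge0 4 t_ge0.
  lra.
by rewrite /a4; add_monomial_bounds B 5%N 8%N; lra.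
Qed.

Lemma a6_le m e : 3 <= m <= 7 -> 0 <= e -> 10 ^+ 9 * e <= 1 -> a6 m e <= 10 ^+ 7.
Proof.
move=> /andP[m_ge3 m_le7] e_ge0 e_small.
have B := @monomial_bounds R e m 7 ltac:(lra) ltac:(lra).
have m_pow j : 0 <= m ^+ j <= 7 ^+ j by rewrite exprn_ge0 ?lerXn2r ?nnegrE //; lra.
by rewrite /a6; add_bounds_down m_pow 6%N 1%N; add_monomial_bounds B 5%N 8%N; lra.
Qed.

Lemma P7_imaginary_root_sqr_le m e u :
  3 <= m <= 7 -> 0 <= e -> 10 ^+ 9 * e <= 1 -> u != 0 ->
  root (map_poly (real_complex R) (P7 m e)) ('i%C * u%:C%C) -> u ^+ 2 <= 10 ^+ 3.
Proof.
move=> m_range e_ge0 e_small u_neq0 /(root_imaginary_odd_poly u_neq0).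
rewrite odd_poly_P7 => root_odd.
have := root_cubic_nonpos_le (a2_le0 m_range e_ge0 e_small) (a0_ge0 e) _ root_odd.
rewrite oppr_le0 sqr_ge0 mulrN opprK => /(_ isT) a4u2_le_a6.
have : 10 ^+ 4 * u ^+ 2 <= a6 m e.
  by apply: le_trans a4u2_le_a6; rewrite ler_wpM2r ?sqr_ge0 ?a4_ge.
have := a6_le m_range e_ge0 e_small; lra.
Qed.

End Coefficients.

Theorem lemma5p2 (R : realType) :
  exists (ups0 eps_star : R), 0 < ups0 /\ 0 < eps_star /\
    forall (m eps ups : R),
      3 <= m <= 7 -> 0 < eps < eps_star -> 0 < ups ->
      root (map_poly (real_complex R) (P7 m eps)) ((Complex 0 1) * (ups%:C)%C) ->
      0 < ups < ups0.
Proof.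
exists 32, (10 ^+ 9)^-1; split; first lra.
split; first by rewrite invr_gt0 exprn_gt0.
move=> m e u m_range /andP[e_gt0 e_lt] u_gt0 root_iu.
have e_small : 10 ^+ 9 * e <= 1 by lra.
have := P7_imaginary_root_sqr_le m_range (ltW e_gt0) e_small (lt0r_neq0 u_gt0) root_iu.
rewrite u_gt0 /=; nra.
Qed.
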